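(* Let $K$ be a compact metric space, $f:K\to\mathbb{R}$ a function and $\alpha$ a countable ordinal. Then $v_\alpha(f)\le\mathrm{osc}_\alpha f\le v_\alpha(f)+v_\alpha(-f)$ pointwise on $K$.
   Context: For $g:K\to[-\infty,\infty]$, $Ug(x)=\limsup_{y\to x}g(y)=\inf_U\sup g(U)$ over open neighborhoods $U$ of $x$ (non-exclusive limsup). Transfinite oscillations: $\mathrm{osc}_0f\equiv0$; for $\beta=\alpha+1$, $\widetilde{\mathrm{osc}}_\beta f(x)=\limsup_{y\to x}(|f(y)-f(x)|+\mathrm{osc}_\alpha f(y))$; for limit $\beta$, $\widetilde{\mathrm{osc}}_\beta f=\sup_{\alpha<\beta}\mathrm{osc}_\alpha f$; $\mathrm{osc}_\beta f=U\widetilde{\mathrm{osc}}_\beta f$. Positive transfinite oscillations $v_\alpha(f)$ are defined identically but without absolute values: $v_0(f)\equiv0$; $\widetilde v_{\alpha+1}(f)(x)=\limsup_{y\to x}(f(y)-f(x)+v_\alpha(f)(y))$; $\widetilde v_\beta(f)=\sup_{\alpha<\beta}v_\alpha(f)$ for limit $\beta$; $v_\beta(f)=U\widetilde v_\beta(f)$. *)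

From HB Require Import structures.
From mathcomp Require Import all_boot all_order all_algebra.
From mathcomp Require Import all_classical all_reals all_analysis.
Set Implicit Arguments. Unset Strict Implicit. Unset Printing Implicit Defensive.
Import Order.TTheory GRing.Theory Num.Theory.
Local Open Scope classical_set_scope.
Local Open Scope ring_scope.
Local Open Scope ereal_scope.

Section TransOsc.
Context {R : realType} {K : metricType R}.

(* Non-exclusive upper limit / upper regularization:
   U h x = inf over open neighbourhoods U of x of sup h(U). *)
Definition ulimsup (h : K -> \bar R) (x : K) : \bar R :=
  ereal_inf [set ereal_sup (h @` U) | U in [set U : set K | open U /\ U x]].

(* Ordinals are represented by elements of a well-ordered type (W, lt):
   the ordinal of b is the order type of its initial segment {a | lt a b}. *)
Context {W : Type} (lt : W -> W -> Prop).

Definition immpred (a b : W) : Prop := lt a b /\ ~ (exists c, lt a c /\ lt c b).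

Definition trans_step (inc : K -> K -> R) (b : W)
    (rec : forall a, lt a b -> K -> \bar R) : K -> \bar R :=
  let tilde : K -> \bar R := fun x =>
    if `[< exists a, immpred a b >] then
      ereal_sup [set e | exists a (h : lt a b),
                   immpred a b /\
                   e = ulimsup (fun y => (inc x y)%:E + rec a h y) x]
    else
      ereal_sup [set e | exists a (h : lt a b), e = rec a h x] in
  fun x =>
    if `[< exists a, lt a b >] then ulimsup tilde x
    else 0 .

Definition trans_osc (wf : well_founded lt) (inc : K -> K -> R) : W -> K -> \bar R :=
  Fix wf (fun _ => K -> \bar R) (trans_step inc).

Definition osc (wf : well_founded lt) (f : K -> R) (b : W) : K -> \bar R :=
  trans_osc wf (fun x y => (`|f y - f x|)%R) b.

Definition vosc (wf : well_founded lt) (f : K -> R) (b : W) : K -> \bar R :=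
  trans_osc wf (fun x y => (f y - f x)%R) b.

End TransOsc.

From HB Require Import structures.
From mathcomp Require Import all_boot all_order all_algebra.
From mathcomp Require Import all_classical all_reals all_analysis.
Import Order.TTheory GRing.Theory Num.Theory.
Local Open Scope classical_set_scope.
Local Open Scope ring_scope.
Local Open Scope ereal_scope.

(* The construction is monotone in
   the increment, and [f y - f x <= |f y - f x|] gives [v <= osc].  For the
   other inequality put [d := f - f x], which vanishes at [x]; then
   [|d| + v + w <= max (d + v + w) (-d + w + v)].  Upper limits preserve max
   and are subadditive, and the extra summand [w] (resp. [v]) is upper
   semicontinuous, so its upper limit at [x] is [w x = -d x + w x], which is
   dominated by the upper limit of [-d + w] (resp. [d + v]). *)

Section UpperLimit.
Context {R : realType} {K : metricType R}.
Implicit Types (g h k : K -> \bar R) (x y : K) (V : set K).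

Lemma le_ereal_sup_image h {V y} : V y -> h y <= ereal_sup (h @` V).
Proof. by move=> Vy; apply: ereal_sup_ubound; exists y. Qed.

Lemma ulimsup_le_sup h {x V} : open V -> V x -> ulimsup h x <= ereal_sup (h @` V).
Proof.
by move=> oV Vx; apply: ge_ereal_inf; exists (ereal_sup (h @` V)) => //; exists V.
Qed.

Lemma ulimsup_le_nbhs {h x V t} :
  open V -> V x -> (forall y, V y -> h y <= t) -> ulimsup h x <= t.
Proof.
move=> oV Vx hV; apply: le_trans (ulimsup_le_sup h oV Vx) _.
by apply/ereal_supP => _ [y Vy <-]; exact: hV.
Qed.

Lemma ulimsup_lt_sup h x t : ulimsup h x < t ->
  exists2 V, open V /\ V x & ereal_sup (h @` V) < t.
Proof. by move/ereal_inf_lt => [_ [V oVx <-] ltt]; exists V. Qed.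

Lemma ulimsup_ge h x : h x <= ulimsup h x.
Proof. by apply/ereal_infP => _ [V [oV Vx] <-]; exact: le_ereal_sup_image. Qed.

Lemma le_ulimsup g h x : (forall y, g y <= h y) -> ulimsup g x <= ulimsup h x.
Proof.
move=> gh; apply/ereal_infP => _ [V [oV Vx] <-].
apply: ulimsup_le_nbhs oV Vx _ => y Vy.
exact: le_trans (gh y) (le_ereal_sup_image h Vy).
Qed.

Lemma ulimsup_idem g x : ulimsup (ulimsup g) x = ulimsup g x.
Proof.
apply/eqP; rewrite eq_le ulimsup_ge andbT.
apply/ereal_infP => _ [V [oV Vx] <-].
by apply: (ulimsup_le_nbhs oV Vx) => y Vy; exact: ulimsup_le_sup oV Vy.
Qed.

Lemma ulimsup_cst c x : ulimsup (fun=> c) x = c.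
Proof.
apply/eqP; rewrite eq_le (ulimsup_ge (fun=> c)) andbT.
exact: ulimsup_le_nbhs openT I _.
Qed.

Lemma ulimsup_max k g h x : (forall y, k y <= maxe (g y) (h y)) ->
  ulimsup k x <= maxe (ulimsup g x) (ulimsup h x).
Proof.
move=> kgh; rewrite leNgt; apply/negP; rewrite gt_max => /andP[/ulimsup_lt_sup].
move=> [V1 [oV1 V1x] g_lt] /ulimsup_lt_sup[V2 [oV2 V2x] h_lt].
have : ulimsup k x <= maxe (ereal_sup (g @` V1)) (ereal_sup (h @` V2)).
  apply: ulimsup_le_nbhs (openI oV1 oV2) (conj V1x V2x) _ => y [V1y V2y].
  apply: le_trans (kgh y) _; rewrite ge_max !le_max.
  by rewrite le_ereal_sup_image // le_ereal_sup_image ?orbT.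
by rewrite leNgt gt_max g_lt h_lt.
Qed.

Lemma ulimsup_add k g h x : -oo < ulimsup g x -> -oo < ulimsup h x ->
  (forall y, k y <= g y + h y) -> ulimsup k x <= ulimsup g x + ulimsup h x.
Proof.
move=> g_gtNy h_gtNy kgh.
case ga : (ulimsup g x) g_gtNy => [a| |] // _; last by rewrite addye ?leey // gt_eqF.
case hb : (ulimsup h x) h_gtNy => [b| |] // _; last by rewrite addey ?leey.
apply/lee_addgt0Pr => e e_gt0.
have e2_gt0 : (0 < e / 2)%R by rewrite divr_gt0.
have [V1 [oV1 V1x] g_lt] :
    exists2 V, open V /\ V x & ereal_sup (g @` V) < (a + e / 2)%R%:E.
  by apply: ulimsup_lt_sup; rewrite ga lte_fin ltrDl.
have [V2 [oV2 V2x] h_lt] :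
    exists2 V, open V /\ V x & ereal_sup (h @` V) < (b + e / 2)%R%:E.
  by apply: ulimsup_lt_sup; rewrite hb lte_fin ltrDl.
rewrite -!EFinD (splitr e) addrACA !EFinD.
apply: ulimsup_le_nbhs (openI oV1 oV2) (conj V1x V2x) _ => y [V1y V2y].
apply: le_trans (kgh y) (leeD _ _).
- exact: le_trans (le_ereal_sup_image g V1y) (ltW g_lt).
- exact: le_trans (le_ereal_sup_image h V2y) (ltW h_lt).
Qed.

Lemma ulimsup_normD_le (d : K -> R) (v w : K -> \bar R) x :
  d x = 0%R -> -oo < v x -> -oo < w x ->
  ulimsup v x <= v x -> ulimsup w x <= w x ->
  ulimsup (fun z => `|d z|%:E + (v z + w z)) x <=
  ulimsup (fun z => (d z)%:E + v z) x + ulimsup (fun z => (- d z)%:E + w z) x.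
Proof.
move=> dx0 vx_gtNy wx_gtNy v_usc w_usc.
have vx_le : v x <= ulimsup (fun z => (d z)%:E + v z) x.
  by apply: le_trans (ulimsup_ge _ x); rewrite /= dx0 add0e.
have wx_le : w x <= ulimsup (fun z => (- d z)%:E + w z) x.
  by apply: le_trans (ulimsup_ge _ x); rewrite /= dx0 oppr0 add0e.
apply: le_trans (ulimsup_max _ (fun z => (d z)%:E + v z + w z)
  (fun z => (- d z)%:E + w z + v z) x _) _.
  move=> z; rewrite le_max; case: (lerP 0 (d z)) => [d_ge0 | d_lt0].
  - by rewrite ger0_norm // addeA lexx.
  - by rewrite ltr0_norm // (addeC (v z)) addeA lexx orbT.
rewrite ge_max; apply/andP; split.
- apply: le_trans (ulimsup_add _ _ w x _ _ (fun z => lexx _)) (leeD (lexx _) _).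
  + exact: lt_le_trans vx_gtNy vx_le.
  + exact: lt_le_trans wx_gtNy (ulimsup_ge w x).
  + exact: le_trans w_usc wx_le.
- rewrite addeC.
  apply: le_trans (ulimsup_add _ _ v x _ _ (fun z => lexx _)) (leeD (lexx _) _).
  + exact: lt_le_trans wx_gtNy wx_le.
  + exact: lt_le_trans vx_gtNy (ulimsup_ge v x).
  + exact: le_trans v_usc vx_le.
Qed.

End UpperLimit.

Section TransfiniteOscillation.
Context {R : realType} {K : metricType R} {W : Type} (lt : W -> W -> Prop).
Context (wf : well_founded lt).
Implicit Types (inc : K -> K -> R) (b : W) (x y : K).

Definition osc_tilde inc b y : \bar R :=
  if `[< exists a, immpred lt a b >] then
    ereal_sup [set e | exists a (_ : lt a b), immpred lt a b /\
       e = ulimsup (fun z => (inc y z)%:E + trans_osc wf inc a z) y]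
  else ereal_sup [set e | exists a (_ : lt a b), e = trans_osc wf inc a y].

Lemma trans_oscE inc b : trans_osc wf inc b =
  fun y => if `[< exists a, lt a b >] then ulimsup (osc_tilde inc b) y else 0.
Proof.
rewrite {1}/trans_osc Fix_eq // => b' F G FG; congr trans_step.
by apply: functional_extensionality_dep => a; apply: functional_extensionality_dep.
Qed.

Lemma ulimsup_trans_osc inc b x :
  ulimsup (trans_osc wf inc b) x = trans_osc wf inc b x.
Proof.
by rewrite trans_oscE; case: asboolP => _; rewrite ?ulimsup_idem ?ulimsup_cst.
Qed.

Lemma osc_tilde_ge0 inc b : (forall x, 0 <= inc x x)%R ->
  (forall a, lt a b -> forall y, 0 <= trans_osc wf inc a y) ->
  (exists a, lt a b) -> forall y, 0 <= osc_tilde inc b y.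
Proof.
move=> inc_ge0 F_ge0 [a0 a0b] y; rewrite /osc_tilde.
case: asboolP => [[a [ab a_pred]] | _].
- apply: le_ereal_sup_tmp; eexists; first by exists a, ab.
  apply: le_trans (ulimsup_ge _ y); apply: adde_ge0; [exact: inc_ge0 | exact: F_ge0].
- apply: le_ereal_sup_tmp; eexists; first by exists a0, a0b.
  exact: F_ge0.
Qed.

Lemma trans_osc_ge0 inc : (forall x, 0 <= inc x x)%R ->
  forall b y, 0 <= trans_osc wf inc b y.
Proof.
move=> inc_ge0 b; elim/(well_founded_induction wf): b => b IH y.
rewrite trans_oscE; case: asboolP => [b_succ | _]; last exact: lexx.
exact: le_trans (osc_tilde_ge0 _ _ inc_ge0 IH b_succ y) (ulimsup_ge _ _).
Qed.

Lemma ulimsup_osc_tilde inc b x :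
  (exists a, lt a b) -> ulimsup (osc_tilde inc b) x = trans_osc wf inc b x.
Proof. by move=> b_succ; rewrite trans_oscE; case: asboolP. Qed.

Lemma le_trans_osc inc inc' : (forall x y, inc x y <= inc' x y)%R ->
  forall b x, trans_osc wf inc b x <= trans_osc wf inc' b x.
Proof.
move=> le_inc b; elim/(well_founded_induction wf): b => b IH x.
rewrite trans_oscE (trans_oscE inc'); case: asboolP => _; last exact: lexx.
apply: le_ulimsup => y.
rewrite /osc_tilde; case: asboolP => _; apply/ereal_supP.
- move=> _ [a [ab [a_pred ->]]].
  apply: le_ereal_sup_tmp; eexists; first by exists a, ab.
  by apply: le_ulimsup => z; apply: leeD; [rewrite lee_fin; exact: le_inc | exact: IH].
- move=> _ [a [ab ->]].
  by apply: le_ereal_sup_tmp; eexists; [exists a, ab | exact: IH].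
Qed.

Section Subadditivity.
Variable inc : K -> K -> R.
Hypothesis inc_refl : forall x, inc x x = 0%R.

Let ninc x y := (- inc x y)%R.
Let ainc x y := `|inc x y|%R.

Let inc_osc_gtNy a y : -oo < trans_osc wf inc a y.
Proof.
by apply: lt_le_trans (ltNyr 0%R) (trans_osc_ge0 _ _ a y) => x; rewrite inc_refl.
Qed.

Let ninc_osc_gtNy a y : -oo < trans_osc wf ninc a y.
Proof.
apply: lt_le_trans (ltNyr 0%R) (trans_osc_ge0 _ _ a y) => x.
by rewrite /ninc inc_refl oppr0.
Qed.

Lemma osc_tilde_norm_le b :
  (forall a, lt a b -> forall y,
     trans_osc wf ainc a y <= trans_osc wf inc a y + trans_osc wf ninc a y) ->
  forall y, osc_tilde ainc b y <= osc_tilde inc b y + osc_tilde ninc b y.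
Proof.
move=> IH y; rewrite /osc_tilde; case: asboolP => _; apply/ereal_supP.
- move=> _ [a [ab [a_pred ->]]].
  apply: le_trans (le_ulimsup _ (fun z => `|inc y z|%:E +
    (trans_osc wf inc a z + trans_osc wf ninc a z)) y _) _.
    by move=> z; apply: leeD; [exact: lexx | exact: IH].
  apply: le_trans (ulimsup_normD_le (inc y) (trans_osc wf inc a)
    (trans_osc wf ninc a) y _ _ _ _ _) (leeD _ _).
  + exact: inc_refl.
  + exact: inc_osc_gtNy.
  + exact: ninc_osc_gtNy.
  + by rewrite ulimsup_trans_osc.
  + by rewrite ulimsup_trans_osc.
  + by apply: le_ereal_sup_tmp; eexists => //; exists a, ab.
  + by apply: le_ereal_sup_tmp; eexists => //; exists a, ab.
- move=> _ [a [ab ->]]; apply: le_trans (IH a ab y) (leeD _ _).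
  + by apply: le_ereal_sup_tmp; eexists => //; exists a, ab.
  + by apply: le_ereal_sup_tmp; eexists => //; exists a, ab.
Qed.

Lemma trans_osc_norm_le b x :
  trans_osc wf ainc b x <= trans_osc wf inc b x + trans_osc wf ninc b x.
Proof.
elim/(well_founded_induction wf): b x => b IH x.
rewrite trans_oscE (trans_oscE inc) (trans_oscE ninc).
case: asboolP => [b_succ | _]; last by rewrite adde0.
apply: ulimsup_add; last exact: osc_tilde_norm_le.
- by rewrite ulimsup_osc_tilde //; exact: inc_osc_gtNy.
- by rewrite ulimsup_osc_tilde //; exact: ninc_osc_gtNy.
Qed.

End Subadditivity.
End TransfiniteOscillation.

Theorem proposition3p2 (R : realType) (K : metricType R)
  (hK : compact [set: K]) (f : K -> R)
  (W : Type) (lt : W -> W -> Prop) (wf : well_founded lt)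
  (lt_trans : forall a b c, lt a b -> lt b c -> lt a c)
  (lt_total : forall a b, lt a b \/ a = b \/ lt b a)
  (W_countable : exists g : W -> nat, injective g)
  (alpha : W) :
  forall x : K,
    (vosc wf f alpha x <= osc wf f alpha x)%E /\
    (osc wf f alpha x <= vosc wf f alpha x + vosc wf (fun y => (- f y)%R) alpha x)%E.
Proof.
move=> x; split; first by apply: le_trans_osc => y z; exact: ler_norm.
have -> : vosc wf (fun y => - f y)%R alpha x =
          trans_osc wf (fun y z => - (f z - f y))%R alpha x.
  rewrite /vosc; congr (trans_osc wf _ alpha x).
  by apply/funext => y; apply/funext => z; rewrite opprB addrC opprK.
by apply: trans_osc_norm_le => y; exact: subrr.
Qed.
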